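(* For $\sigma^2>0$ let $$V(\sigma^2)=\inf\Big\{\sum_{k\in\mathbb Z}k^2x_k^2:\ x\text{ real},\ \sum_kx_k^2=1,\ \sum_kx_kx_{k+1}=\tfrac{1}{\sqrt{1+\sigma^2}}\Big\}$$ (the minimal time spread of a maximally compact sequence with periodic frequency spread $\sigma^2$), and let $\eta_p=\sigma^2V(\sigma^2)$ be the corresponding time-frequency spread. Then for all $\sigma^2>0$, $$\eta_p\ \ge\ \sigma^2\Big(1-\sqrt{\tfrac{\sigma^2}{1+\sigma^2}}\Big).$$ Moreover, there exists $s_0>0$ such that for all $0<\sigma^2\le s_0$, $$\eta_p\ \le\ \frac{\sigma^2}{8}\Big(\frac{\sqrt{1+\sigma^2}}{\sqrt{1+\sigma^2}-1}-\frac12\Big).$$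
   Context: For a unit-norm real sequence centered at time $0$, $\sum_kk^2x_k^2$ is its time spread $\Delta_n^2$, and $\sum_kx_kx_{k+1}=1/\sqrt{1+\sigma^2}$ means its periodic frequency spread $\Delta_{\omega_p}^2=(1-\tau^2)/\tau^2$, $\tau=\sum_kx_kx_{k+1}$, equals $\sigma^2$. *)

From Stdlib Require Import Reals ZArith.
Open Scope R_scope.

(* Sum over Z of f, taken as the limit of the symmetric partial sums
   sum_{|k|<=N} f k.  For the (nonnegative or absolutely summable) series
   used below this coincides with the usual sum over Z. *)
Definition zterm (f : Z -> R) (n : nat) : R :=
  match n with
  | O => f 0%Z
  | S _ => f (Z.of_nat n) + f (- Z.of_nat n)%Z
  end.

Definition zsum (f : Z -> R) (l : R) : Prop := infinite_sum (zterm f) l.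

Definition time_spreads (s2 : R) (t : R) : Prop :=
  exists x : Z -> R,
    zsum (fun k => x k ^ 2) 1 /\
    zsum (fun k => x k * x (k + 1)%Z) (1 / sqrt (1 + s2)) /\
    zsum (fun k => IZR k ^ 2 * x k ^ 2) t.

Definition is_glb (E : R -> Prop) (m : R) : Prop :=
  (forall t, E t -> m <= t) /\ (forall b, (forall t, E t -> b <= t) -> b <= m).

Definition V_is (s2 v : R) : Prop := is_glb (time_spreads s2) v.

From Stdlib Require Import Reals ZArith Lra Lia Psatz.
Open Scope R_scope.

(* Write tau = 1/sqrt(1+s2) for the prescribed lag-one correlation.

   For c, s >= 0 with c^2 + s^2 = 1 the quadratic form
   sum x_k^2 - c sum x_k x_(k+1) - s x_0^2 is nonnegative: its symmetric
   partial sums are sums of squares up to boundary terms that vanish in the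
   limit.  With c = tau and s = sqrt(s2/(1+s2)) this gives x_0^2 <= s for
   every admissible unit sequence, and then sum k^2 x_k^2 >= 1 - x_0^2 >= 1 - s.

   The centered binomial profiles
   b_m(k) = C(2m, m+k) have closed-form correlations (b_m * b_m' = b_(m+m'))
   and second moments.  Finite linear combinations of them, normalized, are
   admissible sequences as soon as their lag-one correlation equals tau times
   their mass; the intermediate value theorem in the mixing parameter
   provides such combinations.  A mixture of b_0 and b_m shows that the set
   of time spreads is nonempty, so V(s2) exists by completeness.  For small
   s2, a specific three-term combination of b_n, b_(n-1), b_(n-2), with n
   chosen from tau, has time spread at most (1+tau)/(16(1-tau)); the
   required polynomial inequalities are certified by expansions in the
   Bernstein-type basis with nonnegative coefficients. *)

Definition zpsum (N : nat) (f : Z -> R) : R := sum_f_R0 (zterm f) N.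

Lemma zpsum_0 f : zpsum 0 f = f 0%Z.
Proof. reflexivity. Qed.

Lemma zpsum_S N f :
  zpsum (S N) f = zpsum N f + f (Z.of_nat (S N)) + f (- Z.of_nat (S N))%Z.
Proof.
  unfold zpsum. change (sum_f_R0 (zterm f) (S N)) with
    (sum_f_R0 (zterm f) N + (f (Z.of_nat (S N)) + f (- Z.of_nat (S N))%Z)). ring.
Qed.

Lemma zpsum_ext N f g : (forall k, f k = g k) -> zpsum N f = zpsum N g.
Proof.
  intros H. induction N.
  - rewrite !zpsum_0. auto.
  - rewrite !zpsum_S, IHN, !H. auto.
Qed.

Lemma zpsum_plus N f g : zpsum N (fun k => f k + g k) = zpsum N f + zpsum N g.
Proof.
  induction N.
  - rewrite !zpsum_0. auto.
  - rewrite !zpsum_S, IHN. lra.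
Qed.

Lemma zpsum_scal N a f : zpsum N (fun k => a * f k) = a * zpsum N f.
Proof.
  induction N.
  - rewrite !zpsum_0. auto.
  - rewrite !zpsum_S, IHN. lra.
Qed.

Lemma zpsum_shift_up N f :
  zpsum N (fun k => f (k + 1)%Z) = zpsum N f - f (- Z.of_nat N)%Z + f (Z.of_nat N + 1)%Z.
Proof.
  induction N.
  - rewrite !zpsum_0. simpl. lra.
  - rewrite !zpsum_S, IHN.
    replace (- Z.of_nat (S N) + 1)%Z with (- Z.of_nat N)%Z by lia.
    replace (Z.of_nat N + 1)%Z with (Z.of_nat (S N)) by lia.
    lra.
Qed.

Lemma zpsum_shift_down N f :
  zpsum N (fun k => f (k - 1)%Z) = zpsum N f + f (- Z.of_nat N - 1)%Z - f (Z.of_nat N).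
Proof.
  assert (H := zpsum_shift_up N (fun k => f (k - 1)%Z)). simpl in H.
  rewrite (zpsum_ext N (fun k => f (k + 1 - 1)%Z) f) in H by (intros k; f_equal; lia).
  replace (Z.of_nat N + 1 - 1)%Z with (Z.of_nat N) in H by lia.
  lra.
Qed.

Lemma zpsum_delta N f : (forall k, k <> 0%Z -> f k = 0) -> zpsum N f = f 0%Z.
Proof.
  intros H. induction N.
  - apply zpsum_0.
  - rewrite zpsum_S, IHN, (H (Z.of_nat (S N))), (H (- Z.of_nat (S N))%Z) by lia. lra.
Qed.

Lemma zpsum_stable M f : (forall k, (Z.of_nat M < Z.abs k)%Z -> f k = 0) ->
  forall N, (M <= N)%nat -> zpsum N f = zpsum M f.
Proof.
  intros H N HN. induction HN; auto.
  rewrite zpsum_S, IHHN, (H (Z.of_nat (S m))), (H (- Z.of_nat (S m))%Z) by lia. lra.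
Qed.

Lemma zsum_finite_support M f :
  (forall k, (Z.of_nat M < Z.abs k)%Z -> f k = 0) -> zsum f (zpsum M f).
Proof.
  intros H eps Heps. exists M. intros n Hn.
  change (sum_f_R0 (zterm f) n) with (zpsum n f).
  rewrite (zpsum_stable M f H n) by lia.
  unfold R_dist. rewrite Rminus_diag, Rabs_R0. lra.
Qed.

Lemma zsum_partial_cv f l : zsum f l -> Un_cv (fun N => zpsum N f) l.
Proof. intros H; exact H. Qed.

Lemma cv_const (a : R) : Un_cv (fun _ => a) a.
Proof.
  intros eps He. exists 0%nat. intros.
  unfold R_dist. rewrite Rminus_diag, Rabs_R0. lra.
Qed.

(* Each step adds g (x_(N+1) - r x_N)^2 + g (x_(-N-1) - r x_(-N))^2. *)
Lemma partial_form_nonneg (x : Z -> R) (c s g r : R) :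
  c = 2 * g * r -> g + g * r ^ 2 = 1 -> 1 - s = 2 * g * r ^ 2 -> 0 <= g ->
  forall N, 0 <= zpsum N (fun k => x k ^ 2)
     - c * (zpsum N (fun k => x k * x (k + 1)%Z) - x (Z.of_nat N) * x (Z.of_nat N + 1)%Z)
     - s * x 0%Z ^ 2
     - g * r ^ 2 * (x (Z.of_nat N) ^ 2 + x (- Z.of_nat N)%Z ^ 2).
Proof.
  intros Hc H1 H2 Hg N. induction N as [|N IH].
  - rewrite !zpsum_0. simpl.
    replace s with (1 - 2 * g * r ^ 2) by lra. ring_simplify. lra.
  - rewrite !zpsum_S.
    replace (- Z.of_nat (S N) + 1)%Z with (- Z.of_nat N)%Z by lia.
    replace (Z.of_nat (S N)) with (Z.of_nat N + 1)%Z by lia.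
    set (a := x (Z.of_nat N)) in *. set (b := x (Z.of_nat N + 1)%Z) in *.
    set (a' := x (- Z.of_nat N)%Z) in *. set (b' := x (- (Z.of_nat N + 1))%Z).
    set (e := x (Z.of_nat N + 1 + 1)%Z).
    set (S1 := zpsum N (fun k => x k ^ 2)) in *.
    set (S2 := zpsum N (fun k => x k * x (k + 1)%Z)) in *.
    assert (step : S1 + b ^ 2 + b' ^ 2 - c * (S2 + b * e + b' * a' - b * e)
                   - s * x 0%Z ^ 2 - g * r ^ 2 * (b ^ 2 + b' ^ 2)
       = (S1 - c * (S2 - a * b) - s * x 0%Z ^ 2 - g * r ^ 2 * (a ^ 2 + a' ^ 2))
         + g * (b - r * a) ^ 2 + g * (b' - r * a') ^ 2
         + (1 - g - g * r ^ 2) * (b ^ 2 + b' ^ 2)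
         - (c - 2 * g * r) * (a * b + b' * a')) by ring.
    rewrite step. replace (1 - g - g * r ^ 2) with 0 by lra.
    replace (c - 2 * g * r) with 0 by lra.
    assert (0 <= g * (b - r * a) ^ 2) by (apply Rmult_le_pos; [lra | apply pow2_ge_0]).
    assert (0 <= g * (b' - r * a') ^ 2) by (apply Rmult_le_pos; [lra | apply pow2_ge_0]).
    lra.
Qed.

(* For a square-summable sequence, x_N x_(N+1) -> 0: both factors are bounded
   by tails of the convergent series of squares. *)
Lemma adjacent_products_cv0 (x : Z -> R) : zsum (fun k => x k ^ 2) 1 ->
  Un_cv (fun N => x (Z.of_nat N) * x (Z.of_nat N + 1)%Z) 0.
Proof.
  intros H eps He.
  destruct (H (eps / 2)) as [N0 HN0]; [lra|].
  exists (S N0). intros n Hn.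
  destruct n as [|n]; [lia|].
  assert (A1 := HN0 (S n) ltac:(lia)).
  assert (A2 := HN0 n ltac:(lia)).
  assert (A3 := HN0 (S (S n)) ltac:(lia)).
  change (sum_f_R0 (zterm (fun k => x k ^ 2)) ?m) with (zpsum m (fun k => x k ^ 2)) in A1, A2, A3.
  rewrite zpsum_S in A1. rewrite !zpsum_S in A3.
  replace (Z.of_nat (S (S n))) with (Z.of_nat (S n) + 1)%Z in A3 by lia.
  set (u := x (Z.of_nat (S n))) in *. set (v := x (Z.of_nat (S n) + 1)%Z) in *.
  set (w := x (- Z.of_nat (S n))%Z) in *. set (w' := x (- (Z.of_nat (S n) + 1))%Z) in *.
  assert (0 <= w ^ 2) by apply pow2_ge_0. assert (0 <= w' ^ 2) by apply pow2_ge_0.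
  assert (0 <= u ^ 2) by apply pow2_ge_0. assert (0 <= v ^ 2) by apply pow2_ge_0.
  unfold R_dist in *. apply Rabs_def2 in A1, A2, A3.
  assert (u ^ 2 < eps) by lra. assert (v ^ 2 < eps) by lra.
  assert (0 <= (u - v) ^ 2) by apply pow2_ge_0. assert (0 <= (u + v) ^ 2) by apply pow2_ge_0.
  rewrite Rminus_0_r. apply Rabs_def1; nra.
Qed.

Lemma correlation_center_bound (x : Z -> R) (tau c s : R) :
  zsum (fun k => x k ^ 2) 1 -> zsum (fun k => x k * x (k + 1)%Z) tau ->
  0 < c -> 0 <= s -> c ^ 2 + s ^ 2 = 1 ->
  c * tau + s * x 0%Z ^ 2 <= 1.
Proof.
  intros Hmass Hcorr Hc Hs Hcs.
  set (g := (1 + s) / 2). set (r := c / (1 + s)).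
  assert (Eg1 : c = 2 * g * r) by (unfold g, r; field; lra).
  assert (Eg2 : g + g * r ^ 2 = 1).
  { unfold g, r. field_simplify; [|lra]. replace (c ^ 2) with (1 - s ^ 2) by lra. field. lra. }
  assert (Eg3 : 1 - s = 2 * g * r ^ 2).
  { unfold g, r. field_simplify; [|lra]. replace (c ^ 2) with (1 - s ^ 2) by lra. field. lra. }
  assert (Hform := partial_form_nonneg x c s g r Eg1 Eg2 Eg3 ltac:(unfold g; lra)).
  assert (L : 0 <= 1 - c * (tau - 0) - s * x 0%Z ^ 2).
  { apply (@Rle_cv_lim (fun _ => 0)
      (fun N => zpsum N (fun k => x k ^ 2)
         - c * (zpsum N (fun k => x k * x (k + 1)%Z) - x (Z.of_nat N) * x (Z.of_nat N + 1)%Z)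
         - s * x 0%Z ^ 2)).
    - intros N. assert (Q := Hform N).
      assert (0 <= g * r ^ 2 * (x (Z.of_nat N) ^ 2 + x (- Z.of_nat N)%Z ^ 2)).
      { apply Rmult_le_pos; [apply Rmult_le_pos; [unfold g; lra | apply pow2_ge_0]|].
        assert (T1 := pow2_ge_0 (x (Z.of_nat N))).
        assert (T2 := pow2_ge_0 (x (- Z.of_nat N)%Z)). lra. }
      lra.
    - apply cv_const.
    - apply CV_minus; [apply CV_minus|].
      + apply zsum_partial_cv, Hmass.
      + apply (CV_mult (fun _ => c)); [apply cv_const|].
        apply CV_minus; [apply zsum_partial_cv, Hcorr | apply adjacent_products_cv0, Hmass].
      + apply cv_const. }
  lra.
Qed.

(* Every k <> 0 has k^2 >= 1, so the time spread dominates the mass off 0. *)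
Lemma spread_ge_offcenter_mass (x : Z -> R) (T : R) :
  zsum (fun k => x k ^ 2) 1 -> zsum (fun k => IZR k ^ 2 * x k ^ 2) T ->
  1 - x 0%Z ^ 2 <= T.
Proof.
  intros Hmass Hspread.
  apply (@Rle_cv_lim (fun N => zpsum N (fun k => x k ^ 2) - x 0%Z ^ 2)
                    (fun N => zpsum N (fun k => IZR k ^ 2 * x k ^ 2))).
  - intros N. induction N.
    + rewrite !zpsum_0. simpl. lra.
    + rewrite !zpsum_S.
      assert (1 <= IZR (Z.of_nat (S N)) ^ 2).
      { rewrite <- INR_IZR_INZ, S_INR. assert (0 <= INR N) by apply pos_INR. nra. }
      assert (1 <= IZR (- Z.of_nat (S N))%Z ^ 2).
      { rewrite opp_IZR, <- INR_IZR_INZ, S_INR. assert (0 <= INR N) by apply pos_INR. nra. }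
      assert (T1 := pow2_ge_0 (x (Z.of_nat (S N)))).
      assert (T2 := pow2_ge_0 (x (- Z.of_nat (S N))%Z)).
      nra.
  - apply CV_minus; [apply zsum_partial_cv, Hmass | apply cv_const].
  - apply zsum_partial_cv, Hspread.
Qed.

Lemma spread_nonneg (x : Z -> R) (T : R) :
  zsum (fun k => IZR k ^ 2 * x k ^ 2) T -> 0 <= T.
Proof.
  intros Hspread.
  apply (@Rle_cv_lim (fun _ => 0) (fun N => zpsum N (fun k => IZR k ^ 2 * x k ^ 2))).
  - intros N. induction N.
    + rewrite !zpsum_0. simpl. lra.
    + rewrite !zpsum_S.
      assert (T1 := pow2_ge_0 (IZR (Z.of_nat (S N)) * x (Z.of_nat (S N)))).
      assert (T2 := pow2_ge_0 (IZR (- Z.of_nat (S N))%Z * x (- Z.of_nat (S N))%Z)).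
      rewrite Rpow_mult_distr in T1, T2. lra.
  - apply cv_const.
  - apply zsum_partial_cv, Hspread.
Qed.

Lemma time_spread_lower_bound (s2 T : R) :
  0 < s2 -> time_spreads s2 T -> 1 - sqrt (s2 / (1 + s2)) <= T.
Proof.
  intros Hs2 [x [Hmass [Hcorr Hspread]]].
  set (s := sqrt (s2 / (1 + s2))).
  set (tau := 1 / sqrt (1 + s2)) in Hcorr.
  assert (Hs0 : 0 < s) by (apply sqrt_lt_R0, Rdiv_lt_0_compat; lra).
  assert (Hss : s ^ 2 = s2 / (1 + s2))
    by (apply pow2_sqrt, Rlt_le, Rdiv_lt_0_compat; lra).
  assert (Hq : 0 < sqrt (1 + s2)) by (apply sqrt_lt_R0; lra).
  assert (Hqq : sqrt (1 + s2) ^ 2 = 1 + s2) by (apply pow2_sqrt; lra).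
  assert (Htau : 0 < tau) by (apply Rdiv_lt_0_compat; lra).
  assert (Htau2 : tau ^ 2 = 1 / (1 + s2)).
  { unfold tau, Rdiv. rewrite Rpow_mult_distr, pow_inv, Hqq. ring. }
  assert (Hunit : tau ^ 2 + s ^ 2 = 1) by (rewrite Htau2, Hss; field; lra).
  assert (Hcenter := correlation_center_bound x tau tau s Hmass Hcorr Htau ltac:(lra) Hunit).
  assert (Hoff := spread_ge_offcenter_mass x T Hmass Hspread).
  assert (s * x 0%Z ^ 2 <= s * s) by nra.
  assert (x 0%Z ^ 2 <= s) by (apply (Rmult_le_reg_l s); lra).
  lra.
Qed.

Fixpoint binom (n k : nat) : R :=
  match n, k with
  | O, O => 1
  | O, S _ => 0
  | S n', O => 1
  | S n', S k' => binom n' k' + binom n' (S k')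
  end.

Lemma binom_0r n : binom n 0 = 1.
Proof. destruct n; reflexivity. Qed.

Lemma binom_above n : forall k, (n < k)%nat -> binom n k = 0.
Proof.
  induction n; intros k Hk; destruct k; try lia; simpl; auto.
  rewrite !IHn by lia. lra.
Qed.

Lemma binom_absorb n : forall j, INR (S j) * binom (S n) (S j) = INR (S n) * binom n j.
Proof.
  induction n as [|n IH]; intros j.
  - destruct j; simpl; [lra | ring].
  - change (binom (S (S n)) (S j)) with (binom (S n) j + binom (S n) (S j)).
    rewrite Rmult_plus_distr_l, IH.
    destruct j as [|j].
    + rewrite !binom_0r, !S_INR. simpl. lra.
    + assert (H := IH j).
      change (binom (S n) (S j)) with (binom n j + binom n (S j)) in *.
      rewrite (S_INR (S j)) in *. rewrite (S_INR (S n)).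
      nra.
Qed.

Lemma binom_absorb_compl n i :
  (INR (S n) - INR i) * binom (S n) i = INR (S n) * binom n i.
Proof.
  destruct i as [|i].
  - rewrite !binom_0r. simpl. lra.
  - assert (H := binom_absorb n i).
    change (binom (S n) (S i)) with (binom n i + binom n (S i)) in *.
    nra.
Qed.

Definition binomZ (n : nat) (j : Z) : R :=
  if (j <? 0)%Z then 0 else binom n (Z.to_nat j).

Lemma binomZ_pascal n j : binomZ (S n) j = binomZ n (j - 1) + binomZ n j.
Proof.
  unfold binomZ.
  destruct (Z.ltb_spec j 0).
  - destruct (Z.ltb_spec (j - 1) 0); [|lia]. lra.
  - destruct (Z.ltb_spec (j - 1) 0).
    + assert (j = 0%Z) by lia. subst. simpl. rewrite binom_0r. lra.
    + replace (Z.to_nat j) with (S (Z.to_nat (j - 1))) by lia. simpl. lra.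
Qed.

Definition cbin (m : nat) (k : Z) : R := binomZ (2 * m) (Z.of_nat m + k).

(* b_(m+1) = b_m * (1, 2, 1): two Pascal steps. *)
Lemma cbin_step m k : cbin (S m) k = cbin m (k - 1) + 2 * cbin m k + cbin m (k + 1).
Proof.
  unfold cbin.
  replace (2 * S m)%nat with (S (S (2 * m))) by lia.
  rewrite !binomZ_pascal.
  replace (Z.of_nat (S m) + k - 1 - 1)%Z with (Z.of_nat m + (k - 1))%Z by lia.
  replace (Z.of_nat (S m) + k - 1)%Z with (Z.of_nat m + k)%Z by lia.
  replace (Z.of_nat (S m) + k)%Z with (Z.of_nat m + (k + 1))%Z by lia.
  lra.
Qed.

Lemma cbin_support m k : (Z.of_nat m < Z.abs k)%Z -> cbin m k = 0.
Proof.
  intros H. unfold cbin, binomZ.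
  destruct (Z.ltb_spec (Z.of_nat m + k) 0); auto.
  apply binom_above. lia.
Qed.

Lemma cbin_0 k : cbin 0 k = if Z.eq_dec k 0 then 1 else 0.
Proof.
  unfold cbin, binomZ. simpl.
  destruct (Z.eq_dec k 0).
  - subst. reflexivity.
  - destruct (Z.ltb_spec k 0); auto.
    destruct (Z.to_nat k) eqn:E; [lia | reflexivity].
Qed.

(* Correlation identity: sum_k b_m(k) b_m'(k+d) = b_(m+m')(d).
   Induction on m with cbin_step; the shifts only move boundary terms,
   which vanish outside the support. *)
Lemma cbin_correlation m : forall m' d N, (m < N)%nat ->
  zpsum N (fun k => cbin m k * cbin m' (k + d)%Z) = cbin (m + m') d.
Proof.
  induction m as [|m IH]; intros m' d N HN.
  - rewrite zpsum_delta.
    + rewrite cbin_0. simpl. lra.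
    + intros k Hk. rewrite cbin_0. destruct (Z.eq_dec k 0); [lia | lra].
  - set (h1 := fun j => cbin m j * cbin m' (j + (d + 1))%Z).
    set (h2 := fun j => cbin m j * cbin m' (j + (d - 1))%Z).
    set (h0 := fun j => cbin m j * cbin m' (j + d)%Z).
    rewrite (zpsum_ext N _ (fun k => (h1 (k - 1)%Z + 2 * h0 k) + h2 (k + 1)%Z)).
    2:{ intros k. unfold h0, h1, h2. rewrite cbin_step.
        replace (k - 1 + (d + 1))%Z with (k + d)%Z by lia.
        replace (k + 1 + (d - 1))%Z with (k + d)%Z by lia. ring. }
    rewrite (zpsum_plus N (fun k => h1 (k - 1)%Z + 2 * h0 k) (fun k => h2 (k + 1)%Z)).
    rewrite (zpsum_plus N (fun k => h1 (k - 1)%Z) (fun k => 2 * h0 k)).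
    rewrite zpsum_scal, (zpsum_shift_down N h1), (zpsum_shift_up N h2).
    unfold h0, h1, h2 at 1 3.
    rewrite !IH by lia.
    unfold h1, h2.
    rewrite (cbin_support m (- Z.of_nat N - 1)%Z), (cbin_support m (Z.of_nat N)),
      (cbin_support m (- Z.of_nat N)%Z), (cbin_support m (Z.of_nat N + 1)%Z) by lia.
    replace (S m + m')%nat with (S (m + m')) by lia.
    rewrite (cbin_step (m + m') d).
    ring.
Qed.

(* The central value C(2M, M), i.e. the mass of b_M' against b_M'' for
   M = M' + M''. *)
Definition central (M : nat) : R := cbin M 0.

Lemma cbin_mass m m' N : (m < N)%nat ->
  zpsum N (fun k => cbin m k * cbin m' k) = central (m + m').
Proof.
  intros H. unfold central. rewrite <- (cbin_correlation m m' 0 N H).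
  apply zpsum_ext. intros k. rewrite Z.add_0_r. auto.
Qed.

Lemma cbin_lag1 m m' N : (m < N)%nat ->
  zpsum N (fun k => cbin m k * cbin m' (k + 1)%Z) = cbin (m + m') 1.
Proof. apply cbin_correlation. Qed.

Lemma central_ratio M : INR (S M) * central (S M) = 2 * (2 * INR M + 1) * central M.
Proof.
  assert (E : forall M, central M = binom (2 * M) M).
  { intros M'. unfold central, cbin, binomZ.
    destruct (Z.ltb_spec (Z.of_nat M' + 0) 0); [lia|]. f_equal. lia. }
  rewrite !E.
  replace (2 * S M)%nat with (S (S (2 * M))) by lia.
  assert (H1 := binom_absorb (S (2 * M)) M).
  assert (H2 := binom_absorb_compl (2 * M) M).
  rewrite !S_INR, mult_INR in *. simpl INR in *.
  nra.
Qed.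

Lemma lag1_ratio M : INR (S M) * cbin M 1 = INR M * central M.
Proof.
  assert (Ec : central M = binom (2 * M) M).
  { unfold central, cbin, binomZ.
    destruct (Z.ltb_spec (Z.of_nat M + 0) 0); [lia|]. f_equal. lia. }
  assert (Ed : cbin M 1 = binom (2 * M) (S M)).
  { unfold cbin, binomZ.
    destruct (Z.ltb_spec (Z.of_nat M + 1) 0); [lia|]. f_equal. lia. }
  rewrite Ed, Ec. destruct M as [|M].
  - simpl. lra.
  - replace (2 * S M)%nat with (S (S (2 * M))) by lia.
    assert (H1 := binom_absorb (S (2 * M)) (S M)).
    assert (H2 := binom_absorb_compl (S (2 * M)) (S M)).
    rewrite !S_INR, mult_INR in *. simpl INR in *.
    nra.
Qed.

Lemma central_pos M : 0 < central M.
Proof.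
  induction M as [|M IH].
  - unfold central. rewrite cbin_0. simpl. lra.
  - assert (H := central_ratio M). assert (0 <= INR M) by apply pos_INR.
    rewrite S_INR in H. nra.
Qed.

Lemma central_next M : central (S M) = 2 * (2 * INR M + 1) / INR (S M) * central M.
Proof.
  assert (H := central_ratio M). assert (0 < INR (S M)) by (apply lt_0_INR; lia).
  apply (Rmult_eq_reg_l (INR (S M))); [|lra]. rewrite H. field. lra.
Qed.

Lemma lag1_val M : cbin M 1 = INR M / INR (S M) * central M.
Proof.
  assert (H := lag1_ratio M). assert (0 < INR (S M)) by (apply lt_0_INR; lia).
  apply (Rmult_eq_reg_l (INR (S M))); [|lra]. rewrite H. field. lra.
Qed.

Lemma cbin_square_weight a k : IZR k ^ 2 * cbin (S a) k
  = INR (S a) ^ 2 * cbin (S a) k - 2 * INR (S a) * (2 * INR a + 1) * cbin a k.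
Proof.
  destruct (Z_lt_le_dec (Z.of_nat (S a)) (Z.abs k)) as [Hb|Hb].
  - rewrite !cbin_support by lia. ring.
  - unfold cbin, binomZ.
    destruct (Z.ltb_spec (Z.of_nat (S a) + k) 0); [lia|].
    destruct (Z.ltb_spec (Z.of_nat a + k) 0).
    + assert (k = - Z.of_nat (S a))%Z by lia. subst k.
      replace (Z.to_nat (Z.of_nat (S a) + - Z.of_nat (S a))) with 0%nat by lia.
      rewrite binom_0r, opp_IZR, <- INR_IZR_INZ. ring.
    + set (i := Z.to_nat (Z.of_nat a + k)).
      replace (Z.to_nat (Z.of_nat (S a) + k)) with (S i) by lia.
      assert (Hk : IZR k = INR i - INR a).
      { rewrite INR_IZR_INZ, INR_IZR_INZ, <- minus_IZR. f_equal. lia. }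
      replace (2 * S a)%nat with (S (S (2 * a))) by lia.
      assert (H1 := binom_absorb (S (2 * a)) i).
      assert (H2 := binom_absorb_compl (2 * a) i).
      rewrite Hk. rewrite !S_INR, mult_INR in *. simpl INR in *.
      set (B := binom (S (S (2 * a))) (S i)) in *.
      set (D := binom (S (2 * a)) i) in *.
      set (E := binom (2 * a) i) in *.
      assert (E1 : ((INR a + 1) ^ 2 - (INR i - INR a) ^ 2) * B
                   = (2 * INR a + 1 - INR i) * ((INR i + 1) * B)) by ring.
      rewrite H1 in E1.
      replace ((2 * INR a + 1 - INR i) * (((1 + 1) * INR a + 1 + 1) * D))
        with ((2 * INR a + 2) * (((1 + 1) * INR a + 1 - INR i) * D)) in E1 by ring.
      rewrite H2 in E1.
      lra.
Qed.

Lemma cbin_moment a m' N : (S a < N)%nat ->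
  zpsum N (fun k => IZR k ^ 2 * cbin (S a) k * cbin m' k)
  = INR (S a) ^ 2 * central (S a + m') - 2 * INR (S a) * (2 * INR a + 1) * central (a + m').
Proof.
  intros H.
  rewrite (zpsum_ext N _ (fun k => INR (S a) ^ 2 * (cbin (S a) k * cbin m' k)
                          + (- (2 * INR (S a) * (2 * INR a + 1))) * (cbin a k * cbin m' k))).
  - rewrite zpsum_plus, !zpsum_scal, !cbin_mass by lia. ring.
  - intros k. rewrite cbin_square_weight. ring.
Qed.

Lemma normalized_time_spread (y : Z -> R) (N : nat) (s2 : R) :
  (forall k, (Z.of_nat N < Z.abs k)%Z -> y k = 0) ->
  0 < zpsum N (fun k => y k ^ 2) ->
  zpsum N (fun k => y k * y (k + 1)%Z) = 1 / sqrt (1 + s2) * zpsum N (fun k => y k ^ 2) ->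
  time_spreads s2 (zpsum N (fun k => IZR k ^ 2 * y k ^ 2) / zpsum N (fun k => y k ^ 2)).
Proof.
  intros Hsupp Hpos Hcorr.
  set (q := 1 / sqrt (1 + s2)) in *.
  set (X := zpsum N (fun k => y k ^ 2)) in *.
  assert (Hq : sqrt X ^ 2 = X) by (apply pow2_sqrt; lra).
  assert (Hsq : 0 < sqrt X) by (apply sqrt_lt_R0; lra).
  assert (Hinv : / X = / sqrt X ^ 2) by (rewrite Hq; auto).
  exists (fun k => y k / sqrt X).
  split; [|split].
  - replace 1 with (zpsum N (fun k => (y k / sqrt X) ^ 2)).
    + apply zsum_finite_support. intros k Hk. rewrite Hsupp by auto. unfold Rdiv. ring.
    + rewrite (zpsum_ext N _ (fun k => / X * y k ^ 2)).
      * rewrite zpsum_scal. fold X. field. lra.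
      * intros k. rewrite Hinv. field. lra.
  - change (1 / sqrt (1 + s2)) with q.
    replace q with (zpsum N (fun k => y k / sqrt X * (y (k + 1)%Z / sqrt X))).
    + apply zsum_finite_support. intros k Hk. rewrite (Hsupp k) by auto. unfold Rdiv. ring.
    + rewrite (zpsum_ext N _ (fun k => / X * (y k * y (k + 1)%Z))).
      * rewrite zpsum_scal, Hcorr. fold X. field. lra.
      * intros k. rewrite Hinv. field. lra.
  - replace (zpsum N (fun k => IZR k ^ 2 * y k ^ 2) / X)
      with (zpsum N (fun k => IZR k ^ 2 * (y k / sqrt X) ^ 2)).
    + apply zsum_finite_support. intros k Hk. rewrite Hsupp by auto. unfold Rdiv. ring.
    + rewrite (zpsum_ext N _ (fun k => / X * (IZR k ^ 2 * y k ^ 2))).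
      * rewrite zpsum_scal. unfold Rdiv. ring.
      * intros k. rewrite Hinv. field. lra.
Qed.

Definition comb3 (a0 a1 a2 : R) (u0 u1 u2 : Z -> R) (k : Z) : R :=
  a0 * u0 k + a1 * u1 k + a2 * u2 k.

Lemma comb3_mass N a0 a1 a2 u0 u1 u2 :
  zpsum N (fun k => comb3 a0 a1 a2 u0 u1 u2 k ^ 2) =
    a0 * a0 * zpsum N (fun k => u0 k * u0 k) + a0 * a1 * zpsum N (fun k => u0 k * u1 k)
  + a0 * a2 * zpsum N (fun k => u0 k * u2 k) + a1 * a0 * zpsum N (fun k => u1 k * u0 k)
  + a1 * a1 * zpsum N (fun k => u1 k * u1 k) + a1 * a2 * zpsum N (fun k => u1 k * u2 k)
  + a2 * a0 * zpsum N (fun k => u2 k * u0 k) + a2 * a1 * zpsum N (fun k => u2 k * u1 k)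
  + a2 * a2 * zpsum N (fun k => u2 k * u2 k).
Proof.
  rewrite <- !zpsum_scal, <- !zpsum_plus. apply zpsum_ext. intros k. unfold comb3. ring.
Qed.

Lemma comb3_lag1 N a0 a1 a2 u0 u1 u2 :
  zpsum N (fun k => comb3 a0 a1 a2 u0 u1 u2 k * comb3 a0 a1 a2 u0 u1 u2 (k + 1)%Z) =
    a0 * a0 * zpsum N (fun k => u0 k * u0 (k + 1)%Z) + a0 * a1 * zpsum N (fun k => u0 k * u1 (k + 1)%Z)
  + a0 * a2 * zpsum N (fun k => u0 k * u2 (k + 1)%Z) + a1 * a0 * zpsum N (fun k => u1 k * u0 (k + 1)%Z)
  + a1 * a1 * zpsum N (fun k => u1 k * u1 (k + 1)%Z) + a1 * a2 * zpsum N (fun k => u1 k * u2 (k + 1)%Z)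
  + a2 * a0 * zpsum N (fun k => u2 k * u0 (k + 1)%Z) + a2 * a1 * zpsum N (fun k => u2 k * u1 (k + 1)%Z)
  + a2 * a2 * zpsum N (fun k => u2 k * u2 (k + 1)%Z).
Proof.
  rewrite <- !zpsum_scal, <- !zpsum_plus. apply zpsum_ext. intros k. unfold comb3. ring.
Qed.

Lemma comb3_moment N a0 a1 a2 u0 u1 u2 :
  zpsum N (fun k => IZR k ^ 2 * comb3 a0 a1 a2 u0 u1 u2 k ^ 2) =
    a0 * a0 * zpsum N (fun k => IZR k ^ 2 * u0 k * u0 k) + a0 * a1 * zpsum N (fun k => IZR k ^ 2 * u0 k * u1 k)
  + a0 * a2 * zpsum N (fun k => IZR k ^ 2 * u0 k * u2 k) + a1 * a0 * zpsum N (fun k => IZR k ^ 2 * u1 k * u0 k)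
  + a1 * a1 * zpsum N (fun k => IZR k ^ 2 * u1 k * u1 k) + a1 * a2 * zpsum N (fun k => IZR k ^ 2 * u1 k * u2 k)
  + a2 * a0 * zpsum N (fun k => IZR k ^ 2 * u2 k * u0 k) + a2 * a1 * zpsum N (fun k => IZR k ^ 2 * u2 k * u1 k)
  + a2 * a2 * zpsum N (fun k => IZR k ^ 2 * u2 k * u2 k).
Proof.
  rewrite <- !zpsum_scal, <- !zpsum_plus. apply zpsum_ext. intros k. unfold comb3. ring.
Qed.

Lemma comb3_support N a0 a1 a2 m0 m1 m2 :
  (m0 <= N)%nat -> (m1 <= N)%nat -> (m2 <= N)%nat ->
  forall k, (Z.of_nat N < Z.abs k)%Z -> comb3 a0 a1 a2 (cbin m0) (cbin m1) (cbin m2) k = 0.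
Proof.
  intros H0 H1 H2 k Hk. unfold comb3. rewrite !cbin_support by lia. ring.
Qed.

(* Every s2 > 0 admits some time spread: mixing the unit impulse b_0 with b_m
   moves the correlation ratio continuously from 0 to 2m/(2m+1) >= tau. *)
Lemma time_spreads_nonempty (s2 : R) : 0 < s2 -> exists T, time_spreads s2 T.
Proof.
  intros Hs2.
  set (tau := 1 / sqrt (1 + s2)).
  assert (Hq1 : 1 < sqrt (1 + s2)).
  { assert (H := sqrt_lt_1_alt 1 (1 + s2) ltac:(lra)). rewrite sqrt_1 in H. exact H. }
  assert (Ht0 : 0 < tau) by (unfold tau; apply Rdiv_lt_0_compat; lra).
  assert (Ht1 : tau < 1).
  { unfold tau. apply (Rmult_lt_reg_r (sqrt (1 + s2))); [lra|]. field_simplify; lra. }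
  set (z := tau / (2 * (1 - tau))).
  destruct (archimed z) as [Hz1 _].
  set (m := Z.to_nat (up z)).
  assert (Hm : z < INR m).
  { unfold m. rewrite INR_IZR_INZ, Z2Nat.id; [lra|]. apply le_IZR.
    assert (0 < z) by (unfold z; apply Rdiv_lt_0_compat; lra). lra. }
  assert (Hmt : tau * (INR (m + m) + 1) <= INR (m + m)).
  { rewrite plus_INR. assert (Ez : tau = z * (2 * (1 - tau))) by (unfold z; field; lra).
    nra. }
  set (y := fun t => comb3 (1 - t) t 0 (cbin 0) (cbin m) (cbin 0)).
  set (mass := fun t => (1 - t) ^ 2 + 2 * (1 - t) * t * central m + t ^ 2 * central (m + m)).
  set (lag := fun t => 2 * (1 - t) * t * cbin m 1 + t ^ 2 * cbin (m + m) 1).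
  assert (Hc0 : central 0 = 1) by (unfold central; rewrite cbin_0; reflexivity).
  assert (Hl0 : cbin 0 1 = 0) by (rewrite cbin_0; reflexivity).
  assert (Hmass : forall t, zpsum (S m) (fun k => y t k ^ 2) = mass t).
  { intros t. unfold y. rewrite comb3_mass, !cbin_mass by lia.
    rewrite !Nat.add_0_r. simpl Nat.add. rewrite Hc0. unfold mass; cbv beta. ring. }
  assert (Hlag : forall t, zpsum (S m) (fun k => y t k * y t (k + 1)%Z) = lag t).
  { intros t. unfold y. rewrite comb3_lag1, !cbin_lag1 by lia.
    rewrite !Nat.add_0_r. simpl Nat.add. rewrite Hl0. unfold lag; cbv beta. ring. }
  destruct (IVT_cor (fun t => lag t - tau * mass t) 0 1) as [t [Ht Hroot]].
  - unfold lag, mass. reg.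
  - lra.
  - unfold lag, mass.
    assert (H := lag1_ratio (m + m)). assert (Hc := central_pos (m + m)).
    assert (0 <= INR (m + m)) by apply pos_INR.
    rewrite S_INR in H.
    assert (0 <= cbin (m + m) 1 - tau * central (m + m)) by nra.
    match goal with |- ?L <= 0 =>
      replace L with (- tau * (cbin (m + m) 1 - tau * central (m + m))) by ring end.
    nra.
  - assert (Hpos : 0 < mass t).
    { unfold mass.
      assert (H1 := central_pos m). assert (H2 := central_pos (m + m)).
      assert (0 <= (1 - t) * t) by nra.
      destruct (Req_dec t 0) as [->|Htn]; [lra|].
      assert (0 < t ^ 2) by (apply pow_lt; lra). nra. }
    eexists. apply (normalized_time_spread (y t) (S m)).
    + apply comb3_support; lia.
    + rewrite Hmass. exact Hpos.
    + rewrite Hmass, Hlag. fold tau. simpl in Hroot. lra.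
Qed.

Lemma V_exists (s2 : R) : 0 < s2 -> exists v, V_is s2 v.
Proof.
  intros Hs2.
  set (E := fun u => time_spreads s2 (- u)).
  destruct (completeness E) as [mm [Hub Hlub]].
  - exists 0. intros u [x [_ [_ Hspread]]].
    assert (H := spread_nonneg x (- u) Hspread). lra.
  - destruct (time_spreads_nonempty s2 Hs2) as [T HT].
    exists (- T). unfold E. rewrite Ropp_involutive. exact HT.
  - exists (- mm). split.
    + intros T HT. assert (E (- T)) by (unfold E; rewrite Ropp_involutive; exact HT).
      assert (H1 := Hub _ H). lra.
    + intros b Hb. assert (H : mm <= - b).
      { apply Hlub. intros u Hu. assert (H2 := Hb _ Hu). lra. }
      lra.
Qed.

(* The test profiles are coef0 b_n + coef1 b_(n-1) + coef2 b_(n-2) with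
   n = m + 3, all quantities being polynomials in x = m and the mixing
   parameter t; nn x is the top degree n. *)
Definition nn (x : R) : R := x + 3.
Definition coef0 (x : R) : R := 2 * nn x ^ 2 * (nn x - 1).
Definition coef1 (x t : R) : R := 2 * (2 * nn x - 1) * (nn x - 1) * (15 * t - 4 * nn x).
Definition coef2 (x t : R) : R := 8 * (2 * nn x - 1) * (2 * nn x - 3) * (nn x + 4 - 6 * t).

(* W_j x is proportional to the central value C(4n - 2j, 2n - j), i.e. to the
   mass pairing of b_(n-i) with b_(n-i') for i + i' = j; the common factor is
   C(4n-10, 2n-5) / W5 x. *)
Definition W5 (x : R) : R := (2 * nn x - 4) * (2 * nn x - 3) * (2 * nn x - 2) * (2 * nn x - 1) * (2 * nn x).
Definition W4 (x : R) : R := 2 * (4 * nn x - 9) * (2 * nn x - 3) * (2 * nn x - 2) * (2 * nn x - 1) * (2 * nn x).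
Definition W3 (x : R) : R := 2 * (4 * nn x - 9) * (2 * (4 * nn x - 7)) * (2 * nn x - 2) * (2 * nn x - 1) * (2 * nn x).
Definition W2 (x : R) : R := 2 * (4 * nn x - 9) * (2 * (4 * nn x - 7)) * (2 * (4 * nn x - 5)) * (2 * nn x - 1) * (2 * nn x).
Definition W1 (x : R) : R := 2 * (4 * nn x - 9) * (2 * (4 * nn x - 7)) * (2 * (4 * nn x - 5)) * (2 * (4 * nn x - 3)) * (2 * nn x).
Definition W0 (x : R) : R := 2 * (4 * nn x - 9) * (2 * (4 * nn x - 7)) * (2 * (4 * nn x - 5)) * (2 * (4 * nn x - 3)) * (2 * (4 * nn x - 1)).

(* lag_den x = (2n+1) 2n (2n-1) (2n-2) (2n-3) clears the denominators of the
   ratios C(2M, M+1)/C(2M, M) = M/(M+1) for M = 2n - j. *)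
Definition lag_den (x : R) : R := (2 * nn x + 1) * (2 * nn x) * (2 * nn x - 1) * (2 * nn x - 2) * (2 * nn x - 3).

(* Mass, lag-one correlation (times lag_den) and second moment of the test
   profile, up to the common factor. *)
Definition mass_poly (x t : R) : R :=
  coef0 x * coef0 x * W0 x
  + coef0 x * coef1 x t * W1 x
  + coef0 x * coef2 x t * W2 x
  + coef1 x t * coef0 x * W1 x
  + coef1 x t * coef1 x t * W2 x
  + coef1 x t * coef2 x t * W3 x
  + coef2 x t * coef0 x * W2 x
  + coef2 x t * coef1 x t * W3 x
  + coef2 x t * coef2 x t * W4 x.
Definition lag_poly (x t : R) : R :=
  coef0 x * coef0 x * W0 x * (2 * nn x - 0) * (2 * nn x + 1 - 1) * (2 * nn x + 1 - 2) * (2 * nn x + 1 - 3) * (2 * nn x + 1 - 4)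
  + coef0 x * coef1 x t * W1 x * (2 * nn x - 1) * (2 * nn x + 1 - 0) * (2 * nn x + 1 - 2) * (2 * nn x + 1 - 3) * (2 * nn x + 1 - 4)
  + coef0 x * coef2 x t * W2 x * (2 * nn x - 2) * (2 * nn x + 1 - 0) * (2 * nn x + 1 - 1) * (2 * nn x + 1 - 3) * (2 * nn x + 1 - 4)
  + coef1 x t * coef0 x * W1 x * (2 * nn x - 1) * (2 * nn x + 1 - 0) * (2 * nn x + 1 - 2) * (2 * nn x + 1 - 3) * (2 * nn x + 1 - 4)
  + coef1 x t * coef1 x t * W2 x * (2 * nn x - 2) * (2 * nn x + 1 - 0) * (2 * nn x + 1 - 1) * (2 * nn x + 1 - 3) * (2 * nn x + 1 - 4)
  + coef1 x t * coef2 x t * W3 x * (2 * nn x - 3) * (2 * nn x + 1 - 0) * (2 * nn x + 1 - 1) * (2 * nn x + 1 - 2) * (2 * nn x + 1 - 4)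
  + coef2 x t * coef0 x * W2 x * (2 * nn x - 2) * (2 * nn x + 1 - 0) * (2 * nn x + 1 - 1) * (2 * nn x + 1 - 3) * (2 * nn x + 1 - 4)
  + coef2 x t * coef1 x t * W3 x * (2 * nn x - 3) * (2 * nn x + 1 - 0) * (2 * nn x + 1 - 1) * (2 * nn x + 1 - 2) * (2 * nn x + 1 - 4)
  + coef2 x t * coef2 x t * W4 x * (2 * nn x - 4) * (2 * nn x + 1 - 0) * (2 * nn x + 1 - 1) * (2 * nn x + 1 - 2) * (2 * nn x + 1 - 3).
Definition moment_poly (x t : R) : R :=
  coef0 x * coef0 x * ((nn x - 0) ^ 2 * W0 x - 2 * (nn x - 0) * (2 * (nn x - 0) - 1) * W1 x)
  + coef0 x * coef1 x t * ((nn x - 0) ^ 2 * W1 x - 2 * (nn x - 0) * (2 * (nn x - 0) - 1) * W2 x)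
  + coef0 x * coef2 x t * ((nn x - 0) ^ 2 * W2 x - 2 * (nn x - 0) * (2 * (nn x - 0) - 1) * W3 x)
  + coef1 x t * coef0 x * ((nn x - 1) ^ 2 * W1 x - 2 * (nn x - 1) * (2 * (nn x - 1) - 1) * W2 x)
  + coef1 x t * coef1 x t * ((nn x - 1) ^ 2 * W2 x - 2 * (nn x - 1) * (2 * (nn x - 1) - 1) * W3 x)
  + coef1 x t * coef2 x t * ((nn x - 1) ^ 2 * W3 x - 2 * (nn x - 1) * (2 * (nn x - 1) - 1) * W4 x)
  + coef2 x t * coef0 x * ((nn x - 2) ^ 2 * W2 x - 2 * (nn x - 2) * (2 * (nn x - 2) - 1) * W3 x)
  + coef2 x t * coef1 x t * ((nn x - 2) ^ 2 * W3 x - 2 * (nn x - 2) * (2 * (nn x - 2) - 1) * W4 x)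
  + coef2 x t * coef2 x t * ((nn x - 2) ^ 2 * W4 x - 2 * (nn x - 2) * (2 * (nn x - 2) - 1) * W5 x).

(* Nonnegativity of spread_gap is the spread bound at the correlation
   tau = lag_poly / (mass_poly * lag_den): it is the target inequality
   16 (moment/mass) (1 - tau) <= 1 + tau with denominators cleared. *)
Definition spread_gap (x t : R) : R := (mass_poly x t * lag_den x + lag_poly x t) * mass_poly x t - 16 * moment_poly x t * (mass_poly x t * lag_den x - lag_poly x t).

(* Each certificate below rewrites a polynomial as a combination, with
   nonnegative coefficients, of products u^i t^j (1-t)^l where u = x - 7;
   such a combination is nonnegative for x >= 7 and t in [0, 1]. *)
Ltac bernstein_nonneg := match goal with
  | |- 0 <= ?a + ?b => apply Rplus_le_le_0_compat; bernstein_nonneg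
  | |- 0 <= ?a * (?b ^ ?n) => apply Rmult_le_pos; [bernstein_nonneg | apply pow_le; lra]
  | |- _ => lra
  end.

Lemma spread_gap_expansion (x t : R) : spread_gap x t = (let u := x - 7 in 980303042327974980971151753216000 * (1 - t) ^ 4 + 6244027393200859492002774908928000 * t ^ 1 * (1 - t) ^ 3 + 12809823076377460215050845814784000 * t ^ 2 * (1 - t) ^ 2 + 12453218088643017005374918950912000 * t ^ 3 * (1 - t) ^ 1 + 2852668493849089657684382662656000 * t ^ 4 + 2334447569633278665262927498444800 * u ^ 1 * (1 - t) ^ 4 + 14549053798580119638889590580838400 * u ^ 1 * t ^ 1 * (1 - t) ^ 3 + 29858073631386455477877008184115200 * u ^ 1 * t ^ 2 * (1 - t) ^ 2 + 28677412466842555828801981159833600 * u ^ 1 * t ^ 3 * (1 - t) ^ 1 + 6663792354716753090719268334796800 * u ^ 1 * t ^ 4 + 2639460514596484261530953035284480 * u ^ 2 * (1 - t) ^ 4 + 16132135059268115513570025894051840 * u ^ 2 * t ^ 1 * (1 - t) ^ 3 + 33111141356680332640759440495083520 * u ^ 2 * t ^ 2 * (1 - t) ^ 2 + 31437813898611789883736918344335360 * u ^ 2 * t ^ 3 * (1 - t) ^ 1 + 7409395239379825997071213392199680 * u ^ 2 * t ^ 4 + 1884932869274102682398238563106816 * u ^ 3 * (1 - t) ^ 4 + 11321146546006473113599832283414528 * u ^ 3 * t ^ 1 * (1 - t) ^ 3 + 23234707120209249172298514756009984 * u ^ 3 * t ^ 2 * (1 - t) ^ 2 + 21820807930025119643271328660979712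 * u ^ 3 * t ^ 3 * (1 - t) ^ 1 + 5215401984081006839490134057926656 * u ^ 3 * t ^ 4 + 954009316425595384111077366169600 * u ^ 4 * (1 - t) ^ 4 + 5641320348176448459467474261770240 * u ^ 4 * t ^ 1 * (1 - t) ^ 3 + 11574538622001594474445016849448960 * u ^ 4 * t ^ 2 * (1 - t) ^ 2 + 10758300531468325832525420345589760 * u ^ 4 * t ^ 3 * (1 - t) ^ 1 + 2607265520489073533816430794752000 * u ^ 4 * t ^ 4 + 363948439010086937956117668429824 * u ^ 5 * (1 - t) ^ 4 + 2122518460660020933356628454670336 * u ^ 5 * t ^ 1 * (1 - t) ^ 3 + 4352756722958325067898335117049856 * u ^ 5 * t ^ 2 * (1 - t) ^ 2 + 4006429415038048955737754991165440 * u ^ 5 * t ^ 3 * (1 - t) ^ 1 + 984378927282620738090466638888960 * u ^ 5 * t ^ 4 + 108652734662286226618659421290496 * u ^ 6 * (1 - t) ^ 4 + 625933437635172784180033318420480 * u ^ 6 * t ^ 1 * (1 - t) ^ 3 + 1282764475915222706477303182393344 * u ^ 6 * t ^ 2 * (1 - t) ^ 2 + 1169865828069266034359336635924480 * u ^ 6 * t ^ 3 * (1 - t) ^ 1 + 291368912755711995555322315276288 * u ^ 6 * t ^ 4 + 26010096292877380215426027356160 * u ^ 7 * (1 - t) ^ 4 + 148233888542498654529527165681664 * u ^ 7 * t ^ 1 * (1 - t) ^ 3 + 303521734928628289957974290399232 * u ^ 7 * t ^ 2 * (1 - t) ^ 2 + 274419095823828666747997547003904 * u ^ 7 * t ^ 3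 * (1 - t) ^ 1 + 69272921770589284653996284362752 * u ^ 7 * t ^ 4 + 5074696391022236262888555282432 * u ^ 8 * (1 - t) ^ 4 + 28650470878305140704354649309184 * u ^ 8 * t ^ 1 * (1 - t) ^ 3 + 58602598518061649144951273226240 * u ^ 8 * t ^ 2 * (1 - t) ^ 2 + 52554865356139842927118380662784 * u ^ 8 * t ^ 3 * (1 - t) ^ 1 + 13444491096594311124385658880000 * u ^ 8 * t ^ 4 + 815649278993055626347144347648 * u ^ 9 * (1 - t) ^ 4 + 4567732555004613710423889543168 * u ^ 9 * t ^ 1 * (1 - t) ^ 3 + 9331454211337062333805061210112 * u ^ 9 * t ^ 2 * (1 - t) ^ 2 + 8305199053051551090491226292224 * u ^ 9 * t ^ 3 * (1 - t) ^ 1 + 2152804481778746346858709352448 * u ^ 9 * t ^ 4 + 108711508917901428900495294464 * u ^ 10 * (1 - t) ^ 4 + 604607392710915930053748457472 * u ^ 10 * t ^ 1 * (1 - t) ^ 3 + 1233410604675010427251325927424 * u ^ 10 * t ^ 2 * (1 - t) ^ 2 + 1090042632160215176985365970944 * u ^ 10 * t ^ 3 * (1 - t) ^ 1 + 286261264426578419011193470976 * u ^ 10 * t ^ 4 + 12053030131460056742624886784 * u ^ 11 * (1 - t) ^ 4 + 66648438325125588459782078464 * u ^ 11 * t ^ 1 * (1 - t) ^ 3 + 135747826786714577156160552960 * u ^ 11 * t ^ 2 * (1 - t) ^ 2 + 119187784394613403622241402880 * u ^ 11 * t ^ 3 * (1 - t) ^ 1 + 31707171312431313928969584640 * u ^ 11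 * t ^ 4 + 1111715277228390355219251200 * u ^ 12 * (1 - t) ^ 4 + 6118593851210917176248434688 * u ^ 12 * t ^ 1 * (1 - t) ^ 3 + 12440197773658139746661105664 * u ^ 12 * t ^ 2 * (1 - t) ^ 2 + 10857127835527968108758368256 * u ^ 12 * t ^ 3 * (1 - t) ^ 1 + 2925432660188189096556560384 * u ^ 12 * t ^ 4 + 85045996514961417863495680 * u ^ 13 * (1 - t) ^ 4 + 466360021376223522830024704 * u ^ 13 * t ^ 1 * (1 - t) ^ 3 + 946356094843655758754611200 * u ^ 13 * t ^ 2 * (1 - t) ^ 2 + 821400243598433868713426944 * u ^ 13 * t ^ 3 * (1 - t) ^ 1 + 224141778262749711766061056 * u ^ 13 * t ^ 4 + 5361438503827264604930048 * u ^ 14 * (1 - t) ^ 4 + 29321256892542105982337024 * u ^ 14 * t ^ 1 * (1 - t) ^ 3 + 59374362991607952884760576 * u ^ 14 * t ^ 2 * (1 - t) ^ 2 + 51278322481342029605371904 * u ^ 14 * t ^ 3 * (1 - t) ^ 1 + 14168985492346821489655808 * u ^ 14 * t ^ 4 + 275598686037098457726976 * u ^ 15 * (1 - t) ^ 4 + 1504591170302014635114496 * u ^ 15 * t ^ 1 * (1 - t) ^ 3 + 3039792838805593290964992 * u ^ 15 * t ^ 2 * (1 - t) ^ 2 + 2613568821096916988723200 * u ^ 15 * t ^ 3 * (1 - t) ^ 1 + 731173925452527129591808 * u ^ 15 * t ^ 4 + 11366787971869870129152 * u ^ 16 * (1 - t) ^ 4 + 62002568041077635284992 * u ^ 16 *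 t ^ 1 * (1 - t) ^ 3 + 124959875195297758445568 * u ^ 16 * t ^ 2 * (1 - t) ^ 2 + 107012583958325448671232 * u ^ 16 * t ^ 3 * (1 - t) ^ 1 + 30307422349930970480640 * u ^ 16 * t ^ 4 + 367149645274310246400 * u ^ 17 * (1 - t) ^ 4 + 2002729242337128480768 * u ^ 17 * t ^ 1 * (1 - t) ^ 3 + 4025734143787866783744 * u ^ 17 * t ^ 2 * (1 - t) ^ 2 + 3435593766009802063872 * u ^ 17 * t ^ 3 * (1 - t) ^ 1 + 984894463710487117824 * u ^ 17 * t ^ 4 + 8947101997530611712 * u ^ 18 * (1 - t) ^ 4 + 48846505143775002624 * u ^ 18 * t ^ 1 * (1 - t) ^ 3 + 97914015201808613376 * u ^ 18 * t ^ 2 * (1 - t) ^ 2 + 83312716889343393792 * u ^ 18 * t ^ 3 * (1 - t) ^ 1 + 24172415366241189888 * u ^ 18 * t ^ 4 + 154696353258143744 * u ^ 19 * (1 - t) ^ 4 + 845975573850226688 * u ^ 19 * t ^ 1 * (1 - t) ^ 3 + 1690768552212037632 * u ^ 19 * t ^ 2 * (1 - t) ^ 2 + 1435082796421873664 * u ^ 19 * t ^ 3 * (1 - t) ^ 1 + 421361145236946944 * u ^ 19 * t ^ 4 + 1691598639333376 * u ^ 20 * (1 - t) ^ 4 + 9273590306308096 * u ^ 20 * t ^ 1 * (1 - t) ^ 3 + 18476317947199488 * u ^ 20 * t ^ 2 * (1 - t) ^ 2 + 15651313945673728 * u ^ 20 * t ^ 3 * (1 - t) ^ 1 + 4649923794436096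 * u ^ 20 * t ^ 4 + 8796093022208 * u ^ 21 * (1 - t) ^ 4 + 48378511622144 * u ^ 21 * t ^ 1 * (1 - t) ^ 3 + 96069828476928 * u ^ 21 * t ^ 2 * (1 - t) ^ 2 + 81260781240320 * u ^ 21 * t ^ 3 * (1 - t) ^ 1 + 24425479012352 * u ^ 21 * t ^ 4).
Proof. unfold spread_gap, mass_poly, lag_poly, moment_poly, lag_den, coef0, coef1, coef2, W0, W1, W2, W3, W4, W5, nn. cbv zeta. ring. Qed.

Lemma spread_gap_nonneg (x t : R) : 7 <= x -> 0 <= t <= 1 -> 0 <= spread_gap x t.
Proof. intros Hx Ht. rewrite (spread_gap_expansion x t). cbv zeta. bernstein_nonneg. Qed.

Lemma mass_poly_expansion (x t : R) : mass_poly x t - 1 = (let u := x - 7 in 756331051714559 * (1 - t) ^ 2 + 2163490582026238 * t ^ 1 * (1 - t) ^ 1 + 1552339345530239 * t ^ 2 + 764624503085056 * u ^ 1 * (1 - t) ^ 2 + 2178008811828224 * u ^ 1 * t ^ 1 * (1 - t) ^ 1 + 1554940872639424 * u ^ 1 * t ^ 2 + 343304578570240 * u ^ 2 * (1 - t) ^ 2 + 973724346790400 * u ^ 2 * t ^ 1 * (1 - t) ^ 1 + 691734272083840 * u ^ 2 * t ^ 2 + 89847579022848 * u ^ 3 * (1 - t) ^ 2 + 253738927613184 * u ^ 3 * t ^ 1 * (1 - t) ^ 1 + 179377107057600 * u ^ 3 * t ^ 2 + 15105224638336 * u ^ 4 * (1 - t) ^ 2 + 42473109290240 * u ^ 4 *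 t ^ 1 * (1 - t) ^ 1 + 29881289724928 * u ^ 4 * t ^ 2 + 1691754004224 * u ^ 5 * (1 - t) ^ 2 + 4736032055040 * u ^ 5 * t ^ 1 * (1 - t) ^ 1 + 3316156084992 * u ^ 5 * t ^ 2 + 126222671744 * u ^ 6 * (1 - t) ^ 2 + 351797093632 * u ^ 6 * t ^ 1 * (1 - t) ^ 1 + 245176112000 * u ^ 6 * t ^ 2 + 6049706496 * u ^ 7 * (1 - t) ^ 2 + 16786338816 * u ^ 7 * t ^ 1 * (1 - t) ^ 1 + 11644979712 * u ^ 7 * t ^ 2 + 169017344 * u ^ 8 * (1 - t) ^ 2 + 466886656 * u ^ 8 * t ^ 1 * (1 - t) ^ 1 + 322420736 * u ^ 8 * t ^ 2 + 2097152 * u ^ 9 * (1 - t) ^ 2 + 5767168 * u ^ 9 * t ^ 1 * (1 - t) ^ 1 + 3964928 * u ^ 9 * t ^ 2).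
Proof. unfold spread_gap, mass_poly, lag_poly, moment_poly, lag_den, coef0, coef1, coef2, W0, W1, W2, W3, W4, W5, nn. cbv zeta. ring. Qed.

Lemma mass_poly_pos (x t : R) : 7 <= x -> 0 <= t <= 1 -> 1 <= mass_poly x t.
Proof.
  intros Hx Ht.
  cut (0 <= mass_poly x t - 1); [lra|].
  rewrite (mass_poly_expansion x t). cbv zeta. bernstein_nonneg.
Qed.

(* At t = 0 the correlation ratio lies below the window, at t = 1 above. *)
Lemma lag_window_low_expansion (x : R) :
  (10 * nn x - 19) * mass_poly x 0 * lag_den x - (10 * nn x - 14) * lag_poly x 0 = (let u := x - 7 in 281786518926917222400 + 396852032315587092480 * u ^ 1 + 257770107931010433024 * u ^ 2 + 102245901786159288320 * u ^ 3 + 27632401138772319232 * u ^ 4 + 5372991270139618816 * u ^ 5 + 773345675950576128 * u ^ 6 + 83423362941100544 * u ^ 7 + 6744653691433472 * u ^ 8 + 403641594396672 * u ^ 9 + 17380573247488 * u ^ 10 + 509919502336 * u ^ 11 + 9136111616 * u ^ 12 + 75497472 * u ^ 13).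
Proof. unfold spread_gap, mass_poly, lag_poly, moment_poly, lag_den, coef0, coef1, coef2, W0, W1, W2, W3, W4, W5, nn. cbv zeta. ring. Qed.

Lemma lag_window_low (x : R) : 7 <= x ->
  (10 * nn x - 14) * lag_poly x 0 <= (10 * nn x - 19) * mass_poly x 0 * lag_den x.
Proof.
  intros Hx. cut (0 <= (10 * nn x - 19) * mass_poly x 0 * lag_den x - (10 * nn x - 14) * lag_poly x 0); [lra|].
  rewrite lag_window_low_expansion. cbv zeta. bernstein_nonneg.
Qed.

Lemma lag_window_high_expansion (x : R) :
  (10 * nn x - 4) * lag_poly x 1 - (10 * nn x - 9) * mass_poly x 1 * lag_den x = (let u := x - 7 in 355205264040737510400 + 505287397882035578880 * u ^ 1 + 331552691061085611264 * u ^ 2 + 132872666807604201728 * u ^ 3 + 36285892447807655168 * u ^ 4 + 7130575217486661888 * u ^ 5 + 1037364140785642496 * u ^ 6 + 113123900866480640 * u ^ 7 + 9246885539916288 * u ^ 8 + 559578448998400 * u ^ 9 + 24367924787200 * u ^ 10 + 723112108032 * u ^ 11 + 13106151424 * u ^ 12 + 109576192 * u ^ 13).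
Proof. unfold spread_gap, mass_poly, lag_poly, moment_poly, lag_den, coef0, coef1, coef2, W0, W1, W2, W3, W4, W5, nn. cbv zeta. ring. Qed.

Lemma lag_window_high (x : R) : 7 <= x ->
  (10 * nn x - 9) * mass_poly x 1 * lag_den x <= (10 * nn x - 4) * lag_poly x 1.
Proof.
  intros Hx. cut (0 <= (10 * nn x - 4) * lag_poly x 1 - (10 * nn x - 9) * mass_poly x 1 * lag_den x); [lra|].
  rewrite lag_window_high_expansion. cbv zeta. bernstein_nonneg.
Qed.

Definition test_profile (m : nat) (t : R) : Z -> R :=
  comb3 (coef0 (INR m)) (coef1 (INR m) t) (coef2 (INR m) t)
        (cbin (S (S (S m)))) (cbin (S (S m))) (cbin (S m)).

Ltac nat_succ_normalize := repeat (rewrite ?Nat.add_succ_l, ?Nat.add_succ_r).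

Lemma test_mass m t :
  zpsum (S (S (S (S m)))) (fun k => test_profile m t k ^ 2) * W5 (INR m)
  = central (S (m + m)) * mass_poly (INR m) t.
Proof.
  unfold test_profile. rewrite comb3_mass, !cbin_mass by lia.
  nat_succ_normalize. rewrite !central_next, !S_INR, plus_INR.
  assert (0 <= INR m) by apply pos_INR.
  unfold mass_poly, coef0, coef1, coef2, W0, W1, W2, W3, W4, W5, nn.
  field. repeat split; lra.
Qed.

Lemma test_lag m t :
  zpsum (S (S (S (S m)))) (fun k => test_profile m t k * test_profile m t (k + 1)%Z)
    * W5 (INR m) * lag_den (INR m)
  = central (S (m + m)) * lag_poly (INR m) t.
Proof.
  unfold test_profile. rewrite comb3_lag1, !cbin_lag1 by lia.
  nat_succ_normalize. rewrite !lag1_val, !central_next, !S_INR, plus_INR.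
  assert (0 <= INR m) by apply pos_INR.
  unfold lag_poly, lag_den, coef0, coef1, coef2, W0, W1, W2, W3, W4, W5, nn.
  field. repeat split; lra.
Qed.

Lemma test_moment m t :
  zpsum (S (S (S (S m)))) (fun k => IZR k ^ 2 * test_profile m t k ^ 2) * W5 (INR m)
  = central (S (m + m)) * moment_poly (INR m) t.
Proof.
  unfold test_profile. rewrite comb3_moment, !cbin_moment by lia.
  nat_succ_normalize. rewrite !central_next, !S_INR, plus_INR.
  assert (0 <= INR m) by apply pos_INR.
  unfold moment_poly, coef0, coef1, coef2, W0, W1, W2, W3, W4, W5, nn.
  field. repeat split; lra.
Qed.

Lemma W5_pos x : 7 <= x -> 0 < W5 x.
Proof. intros H. unfold W5, nn. repeat apply Rmult_lt_0_compat; lra. Qed.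

Lemma lag_den_pos x : 7 <= x -> 0 < lag_den x.
Proof. intros H. unfold lag_den, nn. repeat apply Rmult_lt_0_compat; lra. Qed.

Lemma window_root (x tau : R) : 7 <= x ->
  10 * nn x - 19 <= tau * (10 * nn x - 14) ->
  tau * (10 * nn x - 4) <= 10 * nn x - 9 ->
  exists t, 0 <= t <= 1 /\ lag_poly x t = tau * lag_den x * mass_poly x t.
Proof.
  intros Hx Hlow Hhigh.
  assert (HF := lag_den_pos x Hx).
  assert (Hn : 7 <= nn x) by (unfold nn; lra).
  destruct (IVT_cor (fun t => lag_poly x t - tau * lag_den x * mass_poly x t) 0 1)
    as [t [Ht Hroot]].
  - unfold lag_poly, mass_poly, lag_den, W0, W1, W2, W3, W4, W5, coef0, coef1, coef2. reg.
  - lra.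
  - assert (E0 := lag_window_low x Hx). assert (E1 := lag_window_high x Hx).
    assert (P0 := mass_poly_pos x 0 Hx ltac:(lra)).
    assert (P1 := mass_poly_pos x 1 Hx ltac:(lra)).
    assert (A0 : lag_poly x 0 - tau * lag_den x * mass_poly x 0 <= 0).
    { assert (0 < mass_poly x 0 * lag_den x) by (apply Rmult_lt_0_compat; lra).
      assert (mass_poly x 0 * lag_den x * ((10 * nn x - 19) - tau * (10 * nn x - 14)) <= 0) by nra.
      nra. }
    assert (A1 : 0 <= lag_poly x 1 - tau * lag_den x * mass_poly x 1).
    { assert (0 < mass_poly x 1 * lag_den x) by (apply Rmult_lt_0_compat; lra).
      assert (0 <= mass_poly x 1 * lag_den x * ((10 * nn x - 9) - tau * (10 * nn x - 4))) by nra.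
      nra. }
    nra.
  - exists t. split; [exact Ht | simpl in Hroot; lra].
Qed.

Lemma near_optimal_time_spread (m : nat) (s2 tau : R) :
  (7 <= m)%nat -> tau = 1 / sqrt (1 + s2) ->
  10 * nn (INR m) - 19 <= tau * (10 * nn (INR m) - 14) ->
  tau * (10 * nn (INR m) - 4) <= 10 * nn (INR m) - 9 ->
  exists T, time_spreads s2 T /\ T * (16 * (1 - tau)) <= 1 + tau.
Proof.
  intros Hm Htau Hlow Hhigh.
  set (x := INR m) in *.
  assert (Hx : 7 <= x) by (unfold x; replace 7 with (INR 7) by (simpl; lra); apply le_INR; lia).
  destruct (window_root x tau Hx Hlow Hhigh) as [t [Ht Hroot]].
  assert (HW := W5_pos x Hx). assert (HF := lag_den_pos x Hx).
  assert (HPN := mass_poly_pos x t Hx Ht).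
  assert (HG := spread_gap_nonneg x t Hx Ht).
  assert (HK := central_pos (S (m + m))).
  set (K := central (S (m + m))) in *.
  assert (XV := test_mass m t). assert (YV := test_lag m t). assert (MV := test_moment m t).
  fold x K in XV, YV, MV.
  set (X := zpsum _ (fun k => test_profile m t k ^ 2)) in *.
  set (Y := zpsum _ (fun k => test_profile m t k * test_profile m t (k + 1)%Z)) in *.
  set (Mk := zpsum _ (fun k => IZR k ^ 2 * test_profile m t k ^ 2)) in *.
  assert (HX : X = K * mass_poly x t / W5 x)
    by (apply (Rmult_eq_reg_r (W5 x)); [rewrite XV; field|]; lra).
  assert (HY : Y = tau * X).
  { rewrite HX. apply (Rmult_eq_reg_r (W5 x * lag_den x)); [|nra].
    replace (Y * (W5 x * lag_den x)) with (Y * W5 x * lag_den x) by ring.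
    rewrite YV, Hroot. field. lra. }
  assert (HM : Mk = K * moment_poly x t / W5 x)
    by (apply (Rmult_eq_reg_r (W5 x)); [rewrite MV; field|]; lra).
  assert (HXp : 0 < X) by (rewrite HX; apply Rdiv_lt_0_compat; [apply Rmult_lt_0_compat|]; lra).
  exists (Mk / X). split.
  - apply normalized_time_spread.
    + apply comb3_support; lia.
    + exact HXp.
    + fold X Y. rewrite HY, Htau. ring.
  - assert (Ek : Mk / X = moment_poly x t / mass_poly x t)
      by (rewrite HM, HX; field; repeat split; lra).
    rewrite Ek.
    unfold spread_gap in HG. rewrite Hroot in HG.
    assert (Hfac : 0 < lag_den x * mass_poly x t ^ 2)
      by (apply Rmult_lt_0_compat; [lra | apply pow_lt; lra]).
    assert (Hgap : 0 <= lag_den x * mass_poly x t ^ 2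
                       * ((1 + tau) - 16 * (moment_poly x t / mass_poly x t) * (1 - tau))).
    { replace (lag_den x * mass_poly x t ^ 2
                 * ((1 + tau) - 16 * (moment_poly x t / mass_poly x t) * (1 - tau)))
        with ((mass_poly x t * lag_den x + tau * lag_den x * mass_poly x t) * mass_poly x t
              - 16 * moment_poly x t * (mass_poly x t * lag_den x - tau * lag_den x * mass_poly x t))
        by (field; lra).
      exact HG. }
    assert (0 <= (1 + tau) - 16 * (moment_poly x t / mass_poly x t) * (1 - tau)).
    { apply (Rmult_le_reg_l (lag_den x * mass_poly x t ^ 2)); [lra|].
      rewrite Rmult_0_r. exact Hgap. }
    lra.
Qed.

(* For 81/86 <= tau < 1 the windows cover tau: with w = 5/(1-tau) the window
   conditions read w + 4 <= 10 n <= w + 14, and n = up((w+14)/10) - 1 >= 10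
   satisfies them. *)
Lemma window_degree (tau : R) : 81 / 86 <= tau < 1 ->
  exists m, (7 <= m)%nat /\
    10 * nn (INR m) - 19 <= tau * (10 * nn (INR m) - 14) /\
    tau * (10 * nn (INR m) - 4) <= 10 * nn (INR m) - 9.
Proof.
  intros Htau.
  set (w := 5 / (1 - tau)).
  assert (Hw : w * (1 - tau) = 5) by (unfold w; field; lra).
  assert (Hw86 : 86 <= w) by nra.
  set (z := (w + 14) / 10).
  destruct (archimed z) as [Hz1 Hz2].
  assert (Hup : (10 < up z)%Z) by (apply lt_IZR; unfold z in *; lra).
  exists (Z.to_nat (up z - 4)).
  assert (Hn : nn (INR (Z.to_nat (up z - 4))) = IZR (up z) - 1).
  { unfold nn. rewrite INR_IZR_INZ, Z2Nat.id by lia. rewrite minus_IZR. ring. }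
  rewrite Hn. unfold z in *.
  split; [lia | split; nra].
Qed.

Lemma V_upper_bound (s2 v : R) : 0 < s2 -> s2 <= 1 / 10 -> V_is s2 v ->
  v <= 1 / 8 * (sqrt (1 + s2) / (sqrt (1 + s2) - 1) - 1 / 2).
Proof.
  intros Hs2 Hs0 [Hlow _].
  set (q := sqrt (1 + s2)).
  assert (Hq0 : 0 <= q) by apply sqrt_pos.
  assert (Hqq : q ^ 2 = 1 + s2) by (apply pow2_sqrt; lra).
  assert (Hq1 : 1 < q) by nra.
  assert (Hq2 : q <= 86 / 81) by nra.
  set (tau := 1 / q).
  assert (Htq : tau * q = 1) by (unfold tau; field; lra).
  assert (Ht1 : tau < 1) by nra.
  assert (Ht0 : 81 / 86 <= tau).
  { assert (0 <= tau * (86 / 81 - q))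
      by (apply Rmult_le_pos; [unfold tau; apply Rlt_le, Rdiv_lt_0_compat|]; lra).
    nra. }
  destruct (window_degree tau ltac:(lra)) as [m [Hm [Hwlow Hwhigh]]].
  destruct (near_optimal_time_spread m s2 tau Hm eq_refl Hwlow Hwhigh) as [T [HT HTb]].
  assert (HvT := Hlow T HT).
  assert (E : 1 / 8 * (q / (q - 1) - 1 / 2) = (1 + tau) / (16 * (1 - tau)))
    by (unfold tau; field; split; lra).
  fold q. rewrite E.
  apply (Rmult_le_reg_r (16 * (1 - tau))); [lra|].
  unfold Rdiv. rewrite Rmult_assoc, Rinv_l, Rmult_1_r by lra.
  nra.
Qed.

Theorem theorem3 :
  (forall s2 : R, 0 < s2 -> exists v : R, V_is s2 v) /\
  (forall s2 v : R, 0 < s2 -> V_is s2 v ->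
     s2 * v >= s2 * (1 - sqrt (s2 / (1 + s2)))) /\
  (exists s0 : R, 0 < s0 /\
     forall s2 v : R, 0 < s2 -> s2 <= s0 -> V_is s2 v ->
       s2 * v <= s2 / 8 *
         (sqrt (1 + s2) / (sqrt (1 + s2) - 1) - 1 / 2)).
Proof.
  split; [|split].
  - exact V_exists.
  - intros s2 v Hs2 [_ Hglb].
    assert (Hv : 1 - sqrt (s2 / (1 + s2)) <= v)
      by (apply Hglb; intros T HT; exact (time_spread_lower_bound s2 T Hs2 HT)).
    apply Rle_ge, Rmult_le_compat_l; lra.
  - exists (1 / 10). split; [lra|].
    intros s2 v Hs2 Hs0 HV.
    assert (Hv := V_upper_bound s2 v Hs2 Hs0 HV).
    replace (s2 / 8 * (sqrt (1 + s2) / (sqrt (1 + s2) - 1) - 1 / 2))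
      with (s2 * (1 / 8 * (sqrt (1 + s2) / (sqrt (1 + s2) - 1) - 1 / 2))) by (unfold Rdiv; ring).
    apply Rmult_le_compat_l; lra.
Qed.
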